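(* Let $1\le m\le k\le l$ be integers with $m\mid l-k+1$. Then $$d_m\Big(\frac{\{k-1\}_q!}{g_{l,k-1}}\Big)=\begin{cases}0 & \text{if } m\mid k,\\ 1 & \text{if } m\nmid k.\end{cases}$$ Consequently $d_m\big(\{k\}_q\,\{k-1\}_q!/g_{l,k-1}\big)=1$.
   Context: In $\mathbb{Z}[q,q^{-1}]$ set $\{i\}_q=q^i-1$, $\{i\}_{q,n}=\{i\}_q\cdots\{i-n+1\}_q$ (equal to $1$ for $n=0$), $\{n\}_q!=\{n\}_{q,n}$. For $0\le i\le k\le l$ set $h_{l,k,i}=\{l-i\}_{q,k-i}\{i\}_q!$ and $g_{l,k}=\mathrm{GCD}(h_{l,k,0},\dots,h_{l,k,k})$ (greatest common divisor in the UFD $\mathbb{Z}[q,q^{-1}]$, up to units); $g_{l,k-1}$ divides $\{k-1\}_q!$. For nonzero $a$ and $m\ge 1$, $d_m(a)$ is the largest integer $i$ with $a\in\Phi_m^i\mathbb{Z}[q,q^{-1}]$, $\Phi_m$ the $m$th cyclotomic polynomial. *)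

From HB Require Import structures.
From mathcomp Require Import all_boot all_order all_algebra all_field.
Set Implicit Arguments. Unset Strict Implicit. Unset Printing Implicit Defensive.
Import GRing.Theory.
Local Open Scope ring_scope.

Definition pdvd (a b : {poly int}) : Prop := exists c : {poly int}, b = a * c.

Definition qbr (i : nat) : {poly int} := 'X^i - 1.
Definition qfall (i n : nat) : {poly int} := \prod_(j < n) qbr (i - j)%N.
Definition qfact (n : nat) : {poly int} := qfall n n.
Definition hlki (l k i : nat) : {poly int} := qfall (l - i)%N (k - i)%N * qfact i.

Definition isGCD (g : {poly int}) (s : seq {poly int}) : Prop :=
  (forall x, x \in s -> pdvd g x) /\
  (forall d, (forall x, x \in s -> pdvd d x) -> pdvd d g).

Definition hfam (l k : nat) : seq {poly int} := [seq hlki l k i | i <- iota 0 k.+1].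

Definition dm_is (m : nat) (a : {poly int}) (e : nat) : Prop :=
  pdvd ('Phi_m ^+ e) a /\ (forall j : nat, pdvd ('Phi_m ^+ j) a -> (j <= e)%N).

From HB Require Import structures.
From mathcomp Require Import all_boot all_order all_algebra all_field.
From mathcomp Require Import zify.
Import GRing.Theory Num.Theory.
Local Open Scope ring_scope.
Set Implicit Arguments. Unset Strict Implicit.

(* The cyclotomic valuation d_m is computed as a root multiplicity: if z is a *)
(* primitive m-th root of unity in algC, then for every nonzero f in Z[q],   *)
(* d_m(f) = mult z f, the multiplicity of z as a root of f.  This holds since *)
(* 'Phi_m is monic in Z[q] and is (the image of) the minimal polynomial of z, *)
(* so any f vanishing at z is divisible by 'Phi_m in Z[q], and z is a simple  *)
(* root of 'Phi_m (a factor of the separable polynomial q^m - 1).             *)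
(*   The valuation is additive, and mult z {i}_q = [m | i]; hence            *)
(* mult z {n}_q! = n %/ m and, when m | l - k, mult z h_{l,k,i} =            *)
(* (k - i) %/ m + i %/ m.  For the gcd g of the h_{l,n,i} (n = k - 1) this   *)
(* gives mult z g = (k %/ m) - 1: the lower bound because every h_{l,n,i}    *)
(* has at least this valuation (a carry estimate for floor division), the    *)
(* upper bound because h_{l,n,m-1} attains it.  The theorem follows from     *)
(* mult z a = n %/ m - mult z g, a small floor-division identity.            *)

Definition toC (f : {poly int}) : {poly algC} :=
  map_poly (intr : int -> algC) f.
Definition mult (z : algC) (f : {poly int}) : nat := mup z (toC f).

Lemma toC_eq0 (f : {poly int}) : (toC f == 0) = (f == 0).
Proof. by rewrite -!size_poly_eq0 size_map_inj_poly //; apply: intr_inj. Qed.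

Lemma multM z (f g : {poly int}) : f != 0 -> g != 0 ->
  mult z (f * g) = (mult z f + mult z g)%N.
Proof. by move=> f0 g0; rewrite /mult /toC rmorphM mupM ?toC_eq0. Qed.

Lemma mult1 z : mult z 1 = 0%N.
Proof. by rewrite /mult /toC rmorph1 mupNroot // root1. Qed.

Lemma mult_dvd z (f g c : {poly int}) :
  f = g * c -> f != 0 -> (mult z g <= mult z f)%N.
Proof.
move=> -> /[dup] fn0; rewrite mulf_eq0 negb_or => /andP [g0 c0].
by rewrite multM // leq_addr.
Qed.

Lemma mult_gt0 z (f : {poly int}) : f != 0 -> (0 < mult z f)%N = root (toC f) z.
Proof. by move=> f0; rewrite /mult -XsubC_dvd ?toC_eq0 // dvdp_XsubCl. Qed.

Lemma qbr_neq0 i : (0 < i)%N -> qbr i != 0.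
Proof. by move=> i0; rewrite /qbr -polyC1 monic_neq0 // monicXnsubC. Qed.

Lemma toC_qbr i : toC (qbr i) = 'X^i - 1.
Proof. by rewrite /toC /qbr rmorphB /= map_polyXn rmorph1. Qed.

Lemma qfall_neq0 n c : (c <= n)%N -> qfall n c != 0.
Proof.
move=> le_cn; apply/prodf_neq0 => j _.
by apply: qbr_neq0; rewrite subn_gt0 (leq_trans (ltn_ord j)).
Qed.

(* q^i - 1 is separable over algC, so all its roots are simple. *)
Lemma mult_qbr_le1 z i : (0 < i)%N -> (mult z (qbr i) <= 1)%N.
Proof.
move=> i0; rewrite /mult mup_leq ?toC_eq0 ?qbr_neq0 // toC_qbr.
rewrite separable_nosquare ?size_XsubC //.
by rewrite separable_Xn_sub_1 // pnatr_eq0 -lt0n.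
Qed.

Lemma divnS_addn_le m x y : (0 < m)%N ->
  ((x + y).+1 %/ m <= x %/ m + y %/ m + 1)%N.
Proof.
move=> m0; rewrite -ltnS ltn_divLR //.
have := divn_eq x m; have := divn_eq y m.
have := ltn_pmod x m0; have := ltn_pmod y m0.
lia.
Qed.

Lemma divn_subn_self m N : (0 < m)%N -> (m <= N)%N ->
  ((N - m) %/ m = (N %/ m).-1)%N.
Proof.
by move=> m0 le_mN; rewrite -{2}(subnK le_mN) divnDr // divnn m0 addn1.
Qed.

Lemma divn_gap m n : (0 < m)%N -> (m <= n.+1)%N ->
  (n %/ m - (n.+1 %/ m).-1 = ~~ (m %| n.+1))%N.
Proof.
move=> m_gt0 le_mn; rewrite divnS //.
have [m_dvd | m_ndvd] := boolP (m %| n.+1)%N; first by rewrite add1n subnn.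
have : (0 < n %/ m)%N.
  rewrite divn_gt0 // -ltnS ltn_neqAle le_mn andbT.
  by apply: contraNneq m_ndvd => ->.
by rewrite add0n; move: (n %/ m)%N => q; lia.
Qed.

Lemma Phi_neq0 m : 'Phi_m != 0.
Proof. exact/monic_neq0/Cyclotomic_monic. Qed.

Section PrimitiveRoot.

Variables (m : nat) (z : algC).
Hypothesis prim_z : m.-primitive_root z.

Lemma toC_Phi : toC 'Phi_m = cyclotomic z m.
Proof. exact: Cintr_Cyclotomic. Qed.

(* Divisibility by 'Phi_m in Z[q] is detected by vanishing at z: reduce f  *)
(* modulo the monic 'Phi_m; the remainder vanishes at z and is shorter than *)
(* the minimal polynomial of z, which is the image of 'Phi_m, so it is 0.   *)
Lemma Phi_dvd_of_root f : root (toC f) z -> pdvd 'Phi_m f.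
Proof.
move=> fz0; have monPhi := Cyclotomic_monic m.
set d := Pdiv.CommonRing.rdivp f 'Phi_m.
set r := Pdiv.CommonRing.rmodp f 'Phi_m.
have Df : f = d * 'Phi_m + r := Pdiv.RingMonic.rdivp_eq monPhi f.
suff r0 : r = 0 by exists d; rewrite {1}Df r0 addr0 mulrC.
have rz0 : root (toC r) z.
  have -> : r = f - d * 'Phi_m by rewrite {1}Df addrC addKr.
  rewrite /root /toC rmorphB rmorphM /= -!/(toC _) toC_Phi.
  rewrite hornerD hornerN hornerM.
  have Phiz0 : root (cyclotomic z m) z by rewrite root_cyclotomic.
  by rewrite (rootP fz0) (rootP Phiz0) mulr0 subrr.
have [p [Dp _] dvd_p] := minCpolyP z.
have toC_rat g : toC g = map_poly ratr (map_poly (intr : int -> rat) g).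
  by rewrite -map_poly_comp; apply: eq_map_poly => x /=; rewrite rmorph_int.
have size_p : size p = size 'Phi_m.
  rewrite -(size_map_poly (ratr : {rmorphism rat -> algC}) p) -Dp.
  rewrite (minCpoly_cyclotomic prim_z) -toC_Phi size_map_inj_poly //.
  exact: intr_inj.
have size_r : (size r < size p)%N.
  by rewrite size_p Pdiv.Ring.ltn_rmodpN0 // monic_neq0.
apply/eqP; apply: contraLR size_r => r_neq0; rewrite -leqNgt.
have -> : size r = size (map_poly (intr : int -> rat) r).
  by rewrite size_map_inj_poly //; apply: intr_inj.
apply: dvdp_leq; last by rewrite -dvd_p -toC_rat.
by rewrite -size_poly_eq0 size_map_inj_poly ?size_poly_eq0 //; apply: intr_inj.
Qed.

(* z is a simple root of 'Phi_m, since 'Phi_m divides q^m - 1. *)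
Lemma mult_Phi : mult z 'Phi_m = 1%N.
Proof.
have m_gt0 := prim_order_gt0 prim_z.
apply/eqP; rewrite eqn_leq mult_gt0 ?Phi_neq0 // toC_Phi root_cyclotomic //.
rewrite prim_z andbT.
have [c Dc] : pdvd 'Phi_m (qbr m).
  exists (\prod_(d <- rem m (divisors m)) 'Phi_d).
  by rewrite /qbr -prod_Cyclotomic // (big_rem m) // -dvdn_divisors.
exact: leq_trans (mult_dvd z Dc (qbr_neq0 m_gt0)) (mult_qbr_le1 z m_gt0).
Qed.

Lemma mult_Phi_exp j : mult z ('Phi_m ^+ j) = j.
Proof.
elim: j => [|j IHj]; first by rewrite expr0 mult1.
by rewrite exprS multM ?expf_neq0 ?Phi_neq0 // IHj mult_Phi.
Qed.

Lemma dvd_Phi_exp j (f : {poly int}) :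
  f != 0 -> pdvd ('Phi_m ^+ j) f <-> (j <= mult z f)%N.
Proof.
move=> f0; split=> [[c Dc] | ].
  by have := mult_dvd z Dc f0; rewrite mult_Phi_exp.
elim: j f f0 => [|j IHj] f f0 mult_f; first by exists f; rewrite expr0 mul1r.
have [c Dc] : pdvd 'Phi_m f.
  by apply: Phi_dvd_of_root; rewrite -mult_gt0 // (leq_ltn_trans _ mult_f).
have c0 : c != 0 by apply: contra_neq f0 => c0; rewrite Dc c0 mulr0.
have [b Db] : pdvd ('Phi_m ^+ j) c.
  by apply: IHj => //; move: mult_f; rewrite Dc multM ?Phi_neq0 // mult_Phi.
by exists b; rewrite Dc Db exprS mulrA.
Qed.

Lemma dm_isE (f : {poly int}) e : f != 0 -> mult z f = e -> dm_is m f e.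
Proof.
move=> f0 mult_f; split; first by apply/dvd_Phi_exp; rewrite ?mult_f.
by move=> j /dvd_Phi_exp; rewrite mult_f; apply.
Qed.

Lemma mult_qbr i : (0 < i)%N -> mult z (qbr i) = (m %| i)%N.
Proof.
move=> i_gt0; have zi : root (toC (qbr i)) z = (m %| i)%N.
  by rewrite toC_qbr rootE !hornerE subr_eq0 -(prim_order_dvd prim_z).
have [m_i | m_i] := boolP (m %| i)%N.
  by apply/eqP; rewrite eqn_leq mult_qbr_le1 // mult_gt0 ?qbr_neq0 ?zi.
by rewrite /mult mupNroot ?zi.
Qed.

(* {n}_{q,c} has one factor q^j - 1 with m | j per multiple of m in (n-c, n]. *)
Lemma mult_qfall n c : (c <= n)%N ->
  mult z (qfall n c) = (n %/ m - (n - c) %/ m)%N.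
Proof.
elim: c => [|c IHc] le_cn; first by rewrite /qfall big_ord0 mult1 subn0 subnn.
have lt_cn : (0 < n - c)%N by rewrite subn_gt0.
rewrite /qfall big_ord_recr /= -/(qfall n c).
rewrite multM ?qbr_neq0 ?qfall_neq0 ?(ltnW le_cn) //.
rewrite IHc ?(ltnW le_cn) // mult_qbr //.
have := leq_div2r m (leq_subr c n).
rewrite -(subnSK le_cn) divnS ?(prim_order_gt0 prim_z) //.
by move: (nat_of_bool _) ((n - c.+1) %/ m)%N (n %/ m)%N => b x y; lia.
Qed.

Lemma mult_qfact n : mult z (qfact n) = (n %/ m)%N.
Proof. by rewrite /qfact mult_qfall // subnn div0n subn0. Qed.

(* When m | l - k, the shift by l - k in the first factor of h_{l,k,i} is  *)
(* invisible to floor division by m. *)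
Lemma mult_hlki l k i : (i <= k)%N -> (k <= l)%N -> (m %| l - k)%N ->
  mult z (hlki l k i) = ((k - i) %/ m + i %/ m)%N.
Proof.
move=> le_ik le_kl m_lk; have le_ki_li : (k - i <= l - i)%N by lia.
rewrite /hlki multM ?qfall_neq0 // mult_qfall // mult_qfact.
have -> : (l - i - (k - i) = l - k)%N by lia.
have -> : (l - i = (l - k) + (k - i))%N by lia.
by rewrite divnDl // addKn.
Qed.

Lemma hlki_in_hfam l n i : (i <= n)%N -> hlki l n i \in hfam l n.
Proof. by move=> le_in; apply/mapP; exists i; rewrite // mem_iota. Qed.

(* Valuation of the gcd of h_{l,n,0}, ..., h_{l,n,n} (with m | l - n): it is *)
(* bounded below by the valuation of each member and attained at i = m - 1. *)
Lemma mult_gcd_hfam l n g : (m <= n.+1)%N -> (n <= l)%N -> (m %| l - n)%N ->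
  isGCD g (hfam l n) -> g != 0 /\ mult z g = (n.+1 %/ m).-1.
Proof.
move=> le_mn le_nl m_ln [g_dvd g_max].
have m_gt0 := prim_order_gt0 prim_z.
have h_neq0 i : (i <= n)%N -> hlki l n i != 0.
  by move=> le_in; rewrite mulf_neq0 // qfall_neq0 //; lia.
have g_neq0 : g != 0.
  have [c Dc] := g_dvd _ (hlki_in_hfam l (leqnn n)).
  by apply: contra_neq (h_neq0 n (leqnn n)) => g0; rewrite Dc g0 mul0r.
split=> //; apply/eqP; rewrite eqn_leq; apply/andP; split.
  have le_m1n : (m.-1 <= n)%N by lia.
  have [c Dc] := g_dvd _ (hlki_in_hfam l le_m1n).
  have := mult_dvd z Dc (h_neq0 _ le_m1n).
  rewrite mult_hlki // (@divn_small m.-1) ?ltn_predL // addn0.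
  have -> : (n - m.-1 = n.+1 - m)%N by lia.
  by rewrite divn_subn_self.
apply/dvd_Phi_exp => //; apply: g_max => x /mapP [i].
rewrite mem_iota => /andP [_ lt_in] ->.
have le_in : (i <= n)%N by lia.
apply/dvd_Phi_exp; rewrite ?h_neq0 // mult_hlki // -subn1 leq_subLR addnC.
by have := divnS_addn_le (n - i) i m_gt0; rewrite subnK.
Qed.

End PrimitiveRoot.

Theorem mainTheorem7 (m k l : nat) :
  (1 <= m)%N -> (m <= k)%N -> (k <= l)%N -> (m %| (l - k).+1)%N ->
  forall g a : {poly int},
    isGCD g (hfam l k.-1) ->
    qfact k.-1 = g * a ->
    dm_is m a (if (m %| k)%N then 0%N else 1%N) /\
    dm_is m (qbr k * a) 1%N.
Proof.
move=> m_gt0; case: k => [|n]; first by rewrite leqNgt m_gt0.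
move=> le_mn le_nl; rewrite (subnSK le_nl) => m_ln g a gcd_g /= Dfact.
have [z prim_z] := C_prim_root_exists m_gt0.
have [g_neq0 mult_g] := mult_gcd_hfam prim_z le_mn (ltnW le_nl) m_ln gcd_g.
have a_neq0 : a != 0.
  apply: contra_neq (qfall_neq0 (leqnn n)) => a0.
  by rewrite -/(qfact n) Dfact a0 mulr0.
have mult_a : mult z a = ~~ (m %| n.+1)%N.
  rewrite -(divn_gap m_gt0 le_mn) -(mult_qfact prim_z) Dfact multM //.
  by rewrite mult_g addKn.
have qbrk_neq0 := qbr_neq0 (ltn0Sn n).
split; apply: (dm_isE prim_z); rewrite ?mulf_neq0 ?multM //.
  by rewrite mult_a; case: (m %| n.+1)%N.
by rewrite (mult_qbr prim_z) // mult_a; case: (m %| n.+1)%N.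
Qed.
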